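(* Let $G'$ and $G''$ be two bridgeless cubic graphs that are not 3-edge-colorable. If $G$ is a 2-junction of $G'$ and $G''$, then $\mu_3(G)=\mu_3(G')+\mu_3(G'')$.
   Context: Graphs may have multiple edges. A 1-factor is a spanning 1-regular subgraph. For a cubic graph $H$ and 1-factors $M_1,M_2,M_3$ of $H$, an edge is uncovered if it lies in none of $M_1,M_2,M_3$; $\mu_3(H)$ is the minimum number of uncovered edges over all lists (with possible repetition) of three 1-factors of $H$. A $\mu_3(H)$-core is the subgraph of $H$ induced by the edges lying in none or in at least two of $M_1,M_2,M_3$, for some $M_1,M_2,M_3$ with exactly $\mu_3(H)$ uncovered edges. A 2-junction of $G'$ and $G''$: let $e'=xy$ be an uncovered edge of a $\mu_3(G')$-core of $G'$ and $e''=uv$ an uncovered edge of a $\mu_3(G'')$-core of $G''$; the 2-junction is the graph $G$ with $V(G)=V(G')\cup V(G'')$ and $E(G)=(E(G')\cup E(G'')\cup\{ux,vy\})\setminus\{e',e''\}$. *)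

From HB Require Import structures.
From mathcomp Require Import all_boot.

Set Implicit Arguments.
Unset Strict Implicit.
Unset Printing Implicit Defensive.

(* A finite multigraph: each edge e has endpoints src e and dst e
   (multiple edges allowed; a loop would have src e = dst e). *)
Record mgraph := MGraph {
  vtx : finType;
  edg : finType;
  src : edg -> vtx;
  dst : edg -> vtx }.

Section GraphDefs.
Variable G : mgraph.

(* degree of v in the spanning subgraph with edge set F (loops count twice) *)
Definition degin (F : {set edg G}) (v : vtx G) : nat :=
  #|[set e in F | src e == v]| + #|[set e in F | dst e == v]|.

Definition cubic : Prop := forall v : vtx G, degin setT v = 3.

Definition one_factor (M : {set edg G}) : bool := [forall v, degin M v == 1].

Definition adj_without (e : edg G) : rel (vtx G) := fun x y =>
  [exists f : edg G, (f != e) &&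
     (((src f == x) && (dst f == y)) || ((src f == y) && (dst f == x)))].

Definition is_bridge (e : edg G) : bool :=
  ~~ connect (adj_without e) (src e) (dst e).

Definition bridgeless : Prop := forall e : edg G, ~~ is_bridge e.

Definition three_edge_colorable : Prop :=
  exists c : edg G -> 'I_3,
    forall (v : vtx G) (i : 'I_3), degin [set e | c e == i] v <= 1.

Definition uncovered (M1 M2 M3 : {set edg G}) : {set edg G} :=
  [set e | (e \notin M1) && (e \notin M2) && (e \notin M3)].

(* mu_3(G): minimum number of uncovered edges over triples of 1-factors
   (the default #|edg G| is an upper bound of every such count). *)
Definition mu3 : nat :=
  \big[minn/#|edg G|]_(t : {set edg G} * {set edg G} * {set edg G} |
      [&& one_factor t.1.1, one_factor t.1.2 & one_factor t.2])
    #|uncovered t.1.1 t.1.2 t.2|.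

Definition core_uncovered_edge (e : edg G) : Prop :=
  exists M1 M2 M3 : {set edg G},
    [/\ one_factor M1, one_factor M2, one_factor M3,
        #|uncovered M1 M2 M3| = mu3 & e \in uncovered M1 M2 M3].

End GraphDefs.

(* 2-junction of G1 and G2 along e1 = xy (x = src e1, y = dst e1) and
   e2 = uv (u = src e2, v = dst e2). New edges ux and vy; the flag b swaps
   the roles of x and y (giving uy and vx), covering both labelings. *)
Section Junction.
Variables (G1 G2 : mgraph) (e1 : edg G1) (e2 : edg G2) (b : bool).

Definition jV : finType := (vtx G1 + vtx G2)%type.
Definition jE : finType :=
  ({f : edg G1 | f != e1} + {f : edg G2 | f != e2} + bool)%type.

Definition jx : vtx G1 := if b then dst e1 else src e1.
Definition jy : vtx G1 := if b then src e1 else dst e1.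

Definition jsrc (f : jE) : jV :=
  match f with
  | inl (inl f1) => inl (src (val f1))
  | inl (inr f2) => inr (src (val f2))
  | inr false => inr (src e2)
  | inr true => inr (dst e2)
  end.

Definition jdst (f : jE) : jV :=
  match f with
  | inl (inl f1) => inl (dst (val f1))
  | inl (inr f2) => inr (dst (val f2))
  | inr false => inl jx          (* edge u x *)
  | inr true => inl jy           (* edge v y *)
  end.

Definition junction : mgraph := @MGraph jV jE jsrc jdst.
End Junction.

From mathcomp Require Import all_boot zify.

Set Implicit Arguments.
Unset Strict Implicit.
Unset Printing Implicit Defensive.

(* A 1-factor of the junction contains both new edges or neither: its degrees
   on the G' side sum to |V(G')|, which is even since G' is cubic, while inner
   edges count twice and each new edge once.  Replacing the pair of new edges
   by e' in G' and by e'' in G'' therefore restricts a triple of 1-factors of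
   the junction to triples of 1-factors of G' and G'', splitting the uncovered
   edges; conversely two optimal triples leaving e' and e'' uncovered lift to
   the junction. *)

Lemma sum_indicator_eq (T : finType) (x : T) : \sum_(v : T) (x == v) = 1.
Proof. by rewrite (bigD1 x) //= eqxx big1 // => v /negbTE; rewrite eq_sym => ->. Qed.

Lemma sum_andb_eq (T : finType) (c : bool) (x : T) : \sum_(w : T) (c && (x == w)) = c.
Proof. by case: c; rewrite ?sum_indicator_eq // big1. Qed.

Lemma handshake (I T : finType) (P : pred I) (s d : I -> T) :
  \sum_(v : T) \sum_(i | P i) ((s i == v) + (d i == v)) = #|P|.*2.
Proof.
rewrite exchange_big /= -sum1_card -muln2 big_distrl /=; apply: eq_bigr => i _.
by rewrite big_split /= !sum_indicator_eq.
Qed.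

Lemma big_sig_neq (E : finType) (e : E) (h : E -> nat) :
  \sum_(f : E) h f = h e + \sum_(s : {f : E | f != e}) h (val s).
Proof.
rewrite (bigD1 e) //=; congr (_ + _).
rewrite (reindex_omap (val : {f : E | f != e} -> E) insub); last first.
  by move=> i Hi; rewrite insubT.
by apply: eq_bigl => -[i Hi] /=; rewrite insubT Hi /= eqxx.
Qed.

Lemma card_sumE (T : finType) (A : {set T}) : #|A| = \sum_(x : T) (x \in A).
Proof. by rewrite -sum1_card big_mkcond; apply: eq_bigr => x _; case: (x \in A). Qed.

Lemma deginE (G : mgraph) (F : {set edg G}) v :
  degin F v = \sum_(e in F) ((src e == v) + (dst e == v)).
Proof.
rewrite /degin big_split /= -!big_mkcondr /= !sum1_card.
by congr (_ + _); apply: eq_card => e; rewrite !inE.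
Qed.

Lemma cubic_order_even (G : mgraph) : cubic G -> ~~ odd #|vtx G|.
Proof.
move=> cubG.
have : \sum_(v : vtx G) degin [set: edg G] v = #|[set: edg G]|.*2.
  by rewrite -(handshake (mem [set: edg G]) (@src G) (@dst G)); apply: eq_bigr => v _; apply: deginE.
under eq_bigr do rewrite cubG.
by rewrite sum_nat_const => /(congr1 odd); rewrite odd_double oddM andbT => ->.
Qed.

Lemma bigmin_leq (I : finType) (P : pred I) (F : I -> nat) x j :
  P j -> \big[minn/x]_(i | P i) F i <= F j.
Proof.
move=> Pj; rewrite -big_filter.
have : j \in filter P (index_enum I) by rewrite mem_filter Pj mem_index_enum.
elim: (filter P (index_enum I)) => [//|a s IH]; rewrite inE big_cons => /orP[/eqP->|js].
  exact: geq_minl.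
exact: leq_trans (geq_minr _ _) (IH js).
Qed.

Lemma mu3_min (G : mgraph) (M1 M2 M3 : {set edg G}) :
  one_factor M1 -> one_factor M2 -> one_factor M3 ->
  mu3 G <= #|uncovered M1 M2 M3|.
Proof. by move=> h1 h2 h3; apply: (@bigmin_leq _ _ _ _ (M1, M2, M3)); rewrite /= h1 h2 h3. Qed.

Lemma mu3_lb (G : mgraph) n :
  (forall M1 M2 M3 : {set edg G}, one_factor M1 -> one_factor M2 -> one_factor M3 ->
     n <= #|uncovered M1 M2 M3|) ->
  n <= #|edg G| -> n <= mu3 G.
Proof.
move=> h hc; rewrite /mu3; apply: (big_ind (fun x => n <= x)) => //.
  by move=> x y hx hy; rewrite leq_min hx hy.
by move=> [[M1 M2] M3] /and3P[h1 h2 h3]; apply: h.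
Qed.

Lemma mu3_le_card (G : mgraph) : mu3 G <= #|edg G|.
Proof.
rewrite /mu3; apply: (big_ind (fun x => x <= #|edg G|)) => //.
- by move=> x y hx _; rewrite geq_min hx.
- by move=> t _; apply: max_card.
Qed.

Section JunctionRestriction.
Variables (G1 G2 : mgraph) (e1 : edg G1) (e2 : edg G2) (b : bool).
Local Notation G := (junction e1 e2 b).
Local Notation ux := (inr false : edg G).
Local Notation vy := (inr true : edg G).
Local Notation in1 s := (inl (inl s) : edg G).
Local Notation in2 s := (inl (inr s) : edg G).

(* The deleted edges e1 and e2 both stand for the pair of new edges ux, vy. *)
Definition restrict1 (M : {set edg G}) : {set edg G1} :=
  [set f | if insub f is Some s then in1 s \in M else ux \in M].
Definition restrict2 (M : {set edg G}) : {set edg G2} :=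
  [set f | if insub f is Some s then in2 s \in M else ux \in M].

Definition lift (A1 : {set edg G1}) (A2 : {set edg G2}) : {set edg G} :=
  [set e : edg G | match e with
                   | inl (inl s) => val s \in A1
                   | inl (inr s) => val s \in A2
                   | inr _ => false end].

Lemma restrict1_val (M : {set edg G}) s : (val s \in restrict1 M) = (in1 s \in M).
Proof. by rewrite inE valK. Qed.

Lemma restrict2_val (M : {set edg G}) s : (val s \in restrict2 M) = (in2 s \in M).
Proof. by rewrite inE valK. Qed.

Lemma restrict1_e1 (M : {set edg G}) : (e1 \in restrict1 M) = (ux \in M).
Proof. by rewrite inE insubF // eqxx. Qed.

Lemma restrict2_e2 (M : {set edg G}) : (e2 \in restrict2 M) = (ux \in M).
Proof. by rewrite inE insubF // eqxx. Qed.

Lemma card_junction_edges : #|edg G| = #|edg G1| + #|edg G2|.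
Proof.
rewrite !card_sum !card_sig card_bool.
have card_neq (T : finType) (x : T) : #|[pred f | f != x]| = #|T|.-1.
  by rewrite -(cardC1 x); apply: eq_card => f; rewrite !inE.
rewrite !card_neq; have := max_card (pred1 e1); have := max_card (pred1 e2).
rewrite !card1; lia.
Qed.

Lemma degin_junction_inl (M : {set edg G}) (w : vtx G1) :
  degin M (inl w : vtx G) =
  \sum_(s | in1 s \in M) ((src (val s) == w) + (dst (val s) == w))
  + ((vy \in M) && (jy e1 b == w)) + ((ux \in M) && (jx e1 b == w)).
Proof.
rewrite deginE big_mkcond big_sumType big_sumType /= big_bool /=.
rewrite [X in _ + X + _]big1 ?addn0; last by move=> i _; case: ifP.
by rewrite [in RHS]big_mkcond -addnA; congr (_ + (_ + _)); case: ifP.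
Qed.

Lemma degin_restrict1 (M : {set edg G}) (w : vtx G1) : (ux \in M) = (vy \in M) ->
  degin M (inl w : vtx G) = degin (restrict1 M) w.
Proof.
move=> uxvy; rewrite degin_junction_inl deginE.
rewrite [RHS]big_mkcond (big_sig_neq e1) /=.
rewrite restrict1_e1 -addnA addnC; congr (_ + _).
  by rewrite -uxvy /jx /jy; case: (ux \in M); case: b; rewrite //= addnC.
by rewrite big_mkcond; apply: eq_bigr => s _; rewrite restrict1_val.
Qed.

Lemma degin_restrict2 (M : {set edg G}) (w : vtx G2) : (ux \in M) = (vy \in M) ->
  degin M (inr w : vtx G) = degin (restrict2 M) w.
Proof.
move=> uxvy; rewrite !deginE [LHS]big_mkcond [RHS]big_mkcond (big_sig_neq e2).
rewrite big_sumType big_sumType /= restrict2_e2 big_bool /=.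
rewrite [X in X + _ + _]big1 ?add0n; last by move=> i _; case: ifP.
rewrite addnC; congr (_ + _); last by apply: eq_bigr => s _; rewrite restrict2_val.
by rewrite -uxvy; case: (ux \in M); rewrite /= ?addn0 // addnC.
Qed.

Lemma new_edges_parity (M : {set edg G}) :
  cubic G1 -> one_factor M -> (ux \in M) = (vy \in M).
Proof.
move=> cubG1 /forallP oneM.
have orderE : #|vtx G1| = #|[pred s | in1 s \in M]|.*2 + (vy \in M) + (ux \in M).
  transitivity (\sum_(w : vtx G1) degin M (inl w : vtx G)).
    by rewrite -sum1_card; apply: eq_bigr => w _; apply/esym/eqP/oneM.
  under eq_bigr do rewrite degin_junction_inl.
  by rewrite !big_split /= handshake !sum_andb_eq.
have := cubic_order_even cubG1; rewrite orderE !oddD odd_double.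
by case: (ux \in M); case: (vy \in M).
Qed.

Lemma one_factor_junction (M : {set edg G}) : (ux \in M) = (vy \in M) ->
  one_factor M = one_factor (restrict1 M) && one_factor (restrict2 M).
Proof.
move=> uxvy; apply/forallP/andP => [oneM | [/forallP one1 /forallP one2]].
  by split; apply/forallP => w; rewrite -?degin_restrict1 -?degin_restrict2 ?oneM.
by case=> w; rewrite ?degin_restrict1 ?degin_restrict2.
Qed.

Lemma card_uncovered_junction (M1 M2 M3 : {set edg G}) :
  (ux \in M1) = (vy \in M1) -> (ux \in M2) = (vy \in M2) -> (ux \in M3) = (vy \in M3) ->
  #|uncovered M1 M2 M3| =
  #|uncovered (restrict1 M1) (restrict1 M2) (restrict1 M3)|
  + #|uncovered (restrict2 M1) (restrict2 M2) (restrict2 M3)|.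
Proof.
move=> uxvy1 uxvy2 uxvy3.
rewrite !card_sumE big_sumType big_sumType big_bool (big_sig_neq e1) (big_sig_neq e2) /=.
have -> : \sum_s (in1 s \in uncovered M1 M2 M3)
    = \sum_(s : {f : edg G1 | f != e1}) (val s \in uncovered (restrict1 M1) (restrict1 M2) (restrict1 M3)).
  by apply: eq_bigr => s _; rewrite !inE !valK.
have -> : \sum_s (in2 s \in uncovered M1 M2 M3)
    = \sum_(s : {f : edg G2 | f != e2}) (val s \in uncovered (restrict2 M1) (restrict2 M2) (restrict2 M3)).
  by apply: eq_bigr => s _; rewrite !inE !valK.
have -> : (vy \in uncovered M1 M2 M3)
    = (e1 \in uncovered (restrict1 M1) (restrict1 M2) (restrict1 M3)).
  by rewrite !inE !insubF ?eqxx // uxvy1 uxvy2 uxvy3.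
have -> : (ux \in uncovered M1 M2 M3)
    = (e2 \in uncovered (restrict2 M1) (restrict2 M2) (restrict2 M3)).
  by rewrite !inE !insubF ?eqxx.
by rewrite addnACA; congr (_ + _); apply: addnC.
Qed.

Lemma restrict1_lift (A1 : {set edg G1}) (A2 : {set edg G2}) : e1 \notin A1 -> restrict1 (lift A1 A2) = A1.
Proof.
move=> e1A1; apply/setP => f; rewrite inE; case: insubP => [s _ <-|].
  by rewrite inE.
by move/negPn/eqP->; rewrite inE; apply/esym/negbTE.
Qed.

Lemma restrict2_lift (A1 : {set edg G1}) (A2 : {set edg G2}) : e2 \notin A2 -> restrict2 (lift A1 A2) = A2.
Proof.
move=> e2A2; apply/setP => f; rewrite inE; case: insubP => [s _ <-|].
  by rewrite inE.
by move/negPn/eqP->; rewrite inE; apply/esym/negbTE.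
Qed.

Lemma new_edges_lift (A1 : {set edg G1}) (A2 : {set edg G2}) : (ux \in lift A1 A2) = (vy \in lift A1 A2).
Proof. by rewrite !inE. Qed.


Lemma one_factor_lift (A1 : {set edg G1}) (A2 : {set edg G2}) :
  e1 \notin A1 -> e2 \notin A2 -> one_factor A1 -> one_factor A2 ->
  one_factor (lift A1 A2).
Proof.
move=> e1A1 e2A2 oneA1 oneA2.
by rewrite one_factor_junction ?new_edges_lift // restrict1_lift // restrict2_lift // oneA1.
Qed.

Lemma mu3_junction_lb : cubic G1 -> mu3 G1 + mu3 G2 <= mu3 G.
Proof.
move=> cubG1; apply: mu3_lb; last by rewrite card_junction_edges leq_add ?mu3_le_card.
move=> M1 M2 M3 oneM1 oneM2 oneM3.
have uxvy1 := new_edges_parity cubG1 oneM1.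
have uxvy2 := new_edges_parity cubG1 oneM2.
have uxvy3 := new_edges_parity cubG1 oneM3.
move: oneM1 oneM2 oneM3; rewrite !one_factor_junction // => /andP[? ?] /andP[? ?] /andP[? ?].
by rewrite card_uncovered_junction // leq_add ?mu3_min.
Qed.

Lemma mu3_junction_ub :
  core_uncovered_edge e1 -> core_uncovered_edge e2 -> mu3 G <= mu3 G1 + mu3 G2.
Proof.
move=> [A1 [A2 [A3 [oneA1 oneA2 oneA3 <-]]]] /[!inE] /andP[/andP[e1A1 e1A2] e1A3].
move=> [B1 [B2 [B3 [oneB1 oneB2 oneB3 <-]]]] /[!inE] /andP[/andP[e2B1 e2B2] e2B3].
have := mu3_min (one_factor_lift e1A1 e2B1 oneA1 oneB1)
  (one_factor_lift e1A2 e2B2 oneA2 oneB2) (one_factor_lift e1A3 e2B3 oneA3 oneB3).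
by rewrite card_uncovered_junction ?new_edges_lift // !restrict1_lift // !restrict2_lift.
Qed.

End JunctionRestriction.

Theorem mainTheorem7 (G1 G2 : mgraph) :
  cubic G1 -> cubic G2 -> bridgeless G1 -> bridgeless G2 ->
  ~ three_edge_colorable G1 -> ~ three_edge_colorable G2 ->
  forall (e1 : edg G1) (e2 : edg G2),
    core_uncovered_edge e1 -> core_uncovered_edge e2 ->
    forall b : bool,
      mu3 (junction e1 e2 b) = mu3 G1 + mu3 G2.
Proof.
move=> cubG1 _ _ _ _ _ e1 e2 core1 core2 b.
by apply/eqP; rewrite eqn_leq mu3_junction_ub ?mu3_junction_lb.
Qed.
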